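(* Let $N\ge2$ and suppose there exists a robust Hadamard matrix of size $N$. Then every matrix belonging to any ray or any counter-ray of the Birkhoff polytope $\mathcal{B}_N$ is unistochastic. If moreover there exists a real robust Hadamard matrix of size $N$, then every such matrix is orthostochastic.
   Context: A bistochastic matrix is a real $N\times N$ matrix with nonnegative entries whose rows and columns each sum to 1; the set of them is the Birkhoff polytope $\mathcal{B}_N$. A bistochastic $B$ is unistochastic if there is a unitary $U\in U(N)$ with $B_{ij}=|U_{ij}|^2$ for all $i,j$, and orthostochastic if such $U$ can be chosen real orthogonal. $W_N$ denotes the $N\times N$ matrix with all entries $1/N$. For a permutation matrix $P$ of size $N$, the ray of $P$ is $\{\alpha P+(1-\alpha)W_N:\alpha\ge 0\}\cap\mathcal{B}_N$ and the counter-ray of $P$ is $\{\alpha P+(1-\alpha)W_N:\alpha\le 0\}\cap\mathcal{B}_N$. A (complex) Hadamard matrix of size $N$ is an $N\times N$ matrix $H$ with $|H_{ij}|=1$ and $HH^\dagger=N\mathbb{I}_N$; it is robust if for every $i\neq j$ the matrix $\begin{pmatrix}H_{ii}&H_{ij}\\ H_{ji}&H_{jj}\end{pmatrix}$ is a Hadamard matrix of size 2. *)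

From HB Require Import structures.
From mathcomp Require Import all_boot all_order all_algebra all_fingroup.
From mathcomp Require Import complex.
From mathcomp Require Import reals.
Set Implicit Arguments. Unset Strict Implicit. Unset Printing Implicit Defensive.
Import Order.TTheory GRing.Theory Num.Theory.
Local Open Scope ring_scope.
Local Open Scope complex_scope.

Section Defs.
Variable R : realType.

Definition bistochastic n (B : 'M[R]_n) : Prop :=
  (forall i j, 0 <= B i j) /\
  (forall i, \sum_j B i j = 1) /\
  (forall j, \sum_i B i j = 1).

Definition adjmx m n (U : 'M[R[i]]_(m, n)) : 'M[R[i]]_(n, m) :=
  \matrix_(i, j) (U j i)^*.

Definition unitary n (U : 'M[R[i]]_n) : Prop := U *m adjmx U = 1%:M.

Definition orthogonal n (O : 'M[R]_n) : Prop := O *m O^T = 1%:M.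

Definition unistochastic n (B : 'M[R]_n) : Prop :=
  bistochastic B /\
  exists U : 'M[R[i]]_n, unitary U /\
    forall i j, (B i j)%:C = `|U i j| ^+ 2.

Definition orthostochastic n (B : 'M[R]_n) : Prop :=
  bistochastic B /\
  exists O : 'M[R]_n, orthogonal O /\ forall i j, B i j = O i j ^+ 2.

Definition Wmx n : 'M[R]_n := \matrix_(i, j) (n%:R)^-1.

Definition hadamard n (H : 'M[R[i]]_n) : Prop :=
  (forall i j, `|H i j| = 1) /\ H *m adjmx H = (n%:R)%:M.

Definition sub2 n (H : 'M[R[i]]_n) (i j : 'I_n) : 'M[R[i]]_2 :=
  \matrix_(a < 2, b < 2)
     H (if a == 0 :> nat then i else j) (if b == 0 :> nat then i else j).

Definition robust_hadamard n (H : 'M[R[i]]_n) : Prop :=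
  hadamard H /\ forall i j : 'I_n, i != j -> hadamard (sub2 H i j).

Definition real_mx n (H : 'M[R[i]]_n) : Prop :=
  forall i j, exists x : R, H i j = x%:C.

Definition in_ray n (s : 'S_n) (B : 'M[R]_n) : Prop :=
  bistochastic B /\
  exists alpha : R, 0 <= alpha /\
    B = alpha *: (perm_mx s : 'M[R]_n) + (1 - alpha) *: Wmx n.

Definition in_counter_ray n (s : 'S_n) (B : 'M[R]_n) : Prop :=
  bistochastic B /\
  exists alpha : R, alpha <= 0 /\
    B = alpha *: (perm_mx s : 'M[R]_n) + (1 - alpha) *: Wmx n.

End Defs.

From Pilot Require Import Defs.
From HB Require Import structures.
From mathcomp Require Import all_boot all_order all_algebra all_fingroup.
From mathcomp Require Import complex reals.
From mathcomp Require Import ring.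
Set Implicit Arguments. Unset Strict Implicit. Unset Printing Implicit Defensive.
Import Order.TTheory GRing.Theory Num.Theory.
Local Open Scope complex_scope.
Local Open Scope ring_scope.

(* Dephasing a robust Hadamard matrix H by its diagonal gives K := D^* H with
   unit entries, unit diagonal, K K^* = N and, by robustness, K + K^* = 2.
   Hence U := x + y K is unitary as soon as x^2 + 2xy + N y^2 = 1, and
   |U_ab|^2 is (x + y)^2 on the diagonal and y^2 off it.  A matrix
   alpha P_s + (1 - alpha) W_N of a ray or counter-ray has exactly this shape
   after permuting rows by s, with y = sqrt ((1 - alpha) / N) and
   x + y = sqrt (alpha + (1 - alpha) / N); both radicands are entries of the
   matrix, hence nonnegative.  If H is real, so is U. *)

Section Adjoint.
Variable R : realType.
Implicit Types (n : nat) (z : R[i]).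

Lemma conjcE z : z^*%C = z^*.
Proof. by []. Qed.

Lemma conj_real (x : R) : x%:C^* = x%:C.
Proof. exact: conjc_real. Qed.

Lemma adjmxE m n (A : 'M[R[i]]_(m, n)) : adjmx A = (map_mx Num.conj A)^T.
Proof. by apply/matrixP => i j; rewrite !mxE. Qed.

Lemma adjmxM m n p (A : 'M[R[i]]_(m, n)) (B : 'M[R[i]]_(n, p)) :
  adjmx (A *m B) = adjmx B *m adjmx A.
Proof. by rewrite !adjmxE map_mxM trmx_mul. Qed.

Lemma adjmxD m n (A B : 'M[R[i]]_(m, n)) : adjmx (A + B) = adjmx A + adjmx B.
Proof. by apply/matrixP => i j; rewrite !mxE rmorphD. Qed.

Lemma adjmxZ m n z (A : 'M[R[i]]_(m, n)) : adjmx (z *: A) = z^* *: adjmx A.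
Proof. by apply/matrixP => i j; rewrite !mxE rmorphM. Qed.

Lemma adjmx_scalar n z : adjmx (z%:M : 'M_n) = z^*%:M.
Proof. by rewrite adjmxE map_scalar_mx tr_scalar_mx. Qed.

Lemma adjmx_real m n (O : 'M[R]_(m, n)) :
  adjmx (map_mx (real_complex R) O) = map_mx (real_complex R) O^T.
Proof. by apply/matrixP => i j; rewrite !mxE conjc_real. Qed.

Lemma unitaryM n (A B : 'M[R[i]]_n) : unitary A -> unitary B -> unitary (A *m B).
Proof.
by rewrite /unitary adjmxM => hA hB; rewrite mulmxA -(mulmxA A) hB mulmx1.
Qed.

Lemma unitary_perm_mx n (s : 'S_n) : unitary (perm_mx s : 'M[R[i]]_n).
Proof.
rewrite /unitary -(map_perm_mx (real_complex R)) adjmx_real map_perm_mx.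
by rewrite tr_perm_mx map_perm_mx -perm_mxM mulgV perm_mx1.
Qed.

Lemma unitary_row_perm n (s : 'S_n) (U : 'M[R[i]]_n) :
  unitary U -> unitary (row_perm s U).
Proof. by rewrite row_permE; apply/unitaryM/unitary_perm_mx. Qed.

Lemma orthogonal_real_unitary n (O : 'M[R]_n) :
  unitary (map_mx (real_complex R) O) -> Defs.orthogonal O.
Proof.
rewrite /unitary /Defs.orthogonal adjmx_real -map_mxM.
rewrite -(map_mx1 (real_complex R)).
exact: map_mx_inj.
Qed.

Lemma unitary_diag_mx n (d : 'rV[R[i]]_n) :
  (forall a, `|d 0 a| = 1) -> unitary (diag_mx d).
Proof.
move=> hd; apply/matrixP => a b; rewrite mul_diag_mx !mxE.
case: eqVneq => [->|_]; last by rewrite !mulr0n rmorph0 mulr0.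
by rewrite !mulr1n conjcE -normCK hd expr1n.
Qed.


End Adjoint.

Section Dephasing.
Variables (R : realType) (n : nat) (H : 'M[R[i]]_n).

Definition dephase : 'M[R[i]]_n := diag_mx (\row_a (H a a)^*) *m H.

Lemma dephaseE a b : dephase a b = (H a a)^* * H a b.
Proof. by rewrite /dephase mul_diag_mx !mxE. Qed.

Hypothesis hH : hadamard H.

Lemma dephase_diag a : dephase a a = 1.
Proof. by rewrite dephaseE mulrC -normCK hH.1 expr1n. Qed.

Lemma norm_dephase a b : `|dephase a b| = 1.
Proof. by rewrite dephaseE normrM norm_conjC !hH.1 mulr1. Qed.

Lemma dephase_mul_adj : dephase *m adjmx dephase = n%:R%:M.
Proof.
rewrite /dephase adjmxM mulmxA -(mulmxA _ H) hH.2 mul_mx_scalar -scalemxAl.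
by rewrite unitary_diag_mx ?scalemx1 // => a; rewrite mxE norm_conjC hH.1.
Qed.

Lemma sub2_orthogonal_rows {a b : 'I_n} : hadamard (sub2 H a b) ->
  H a a * (H b a)^* + H a b * (H b b)^* = 0.
Proof.
move=> [_ h2]; have := congr1 (fun M : 'M[R[i]]_2 => M 0 1) h2.
by rewrite !mxE !big_ord_recl big_ord0 !mxE /= addr0 mulr0n.
Qed.

Lemma dephase_add_adj : (forall a b, a != b -> hadamard (sub2 H a b)) ->
  dephase + adjmx dephase = 2%:M.
Proof.
move=> hsub; apply/matrixP => a b; rewrite mxE [adjmx _ a b]mxE [RHS]mxE.
have [<-|nab] := eqVneq a b; first by rewrite dephase_diag conjcE rmorph1.
rewrite !dephaseE conjcE rmorphM /= conjCK mulr0n.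
have unit_aa : (H a a)^* * H a a = 1 by rewrite mulrC -normCK hH.1 expr1n.
have unit_bb : (H b b)^* * H b b = 1 by rewrite mulrC -normCK hH.1 expr1n.
(* Scale the orthogonality of the rows of the 2x2 block by (H a a)^* H b b. *)
rewrite -(mulr0 ((H a a)^* * H b b)) -(sub2_orthogonal_rows (hsub _ _ nab)).
transitivity ((H a a)^* * H a a * (H b b * (H b a)^*)
              + (H a a)^* * H a b * ((H b b)^* * H b b)).
  by rewrite unit_aa unit_bb mul1r mulr1 addrC.
ring.
Qed.
End Dephasing.

Lemma unitary_scalar_add (R : realType) n (K : 'M[R[i]]_n) (x y : R) :
  K *m adjmx K = n%:R%:M -> K + adjmx K = 2%:M ->
  x ^+ 2 + 2 * x * y + n%:R * y ^+ 2 = 1 -> unitary (x%:C%:M + y%:C *: K).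
Proof.
move=> hKK hK2 hxy; rewrite /unitary adjmxD adjmxZ adjmx_scalar !conj_real.
rewrite mulmxDl !mulmxDr !mul_scalar_mx mul_mx_scalar -scalemxAl -scalemxAr.
rewrite hKK !scalerA.
rewrite addrA -(addrA (_ *: _%:M)) -scalerDr (addrC (adjmx K)) hK2.
rewrite !scale_scalar_mx -!raddfD /=; congr _%:M.
have := congr1 (real_complex R) hxy.
rewrite !rmorphD !rmorphM rmorph1 !rmorph_nat => hxyC.
by rewrite -[in RHS]hxyC; ring.
Qed.

Lemma norm_scalar_add_entry (R : realType) n (K : 'M[R[i]]_n) (x y : R) :
  (forall a, K a a = 1) -> (forall a b, `|K a b| = 1) ->
  forall a b, `|(x%:C%:M + y%:C *: K) a b| ^+ 2 =
              (if a == b then (x + y) ^+ 2 else y ^+ 2)%:C.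
Proof.
move=> hdiag hnorm a b; rewrite !mxE.
have [<-|_] := eqVneq a b.
  by rewrite hdiag mulr1n mulr1 -rmorphD normCK conj_real rmorphXn.
by rewrite mulr0n add0r normrM hnorm mulr1 normCK conj_real rmorphXn.
Qed.

Lemma ray_entries_sqr (R : realType) n (s : 'S_n) (B : 'M[R]_n) (al : R) :
  (1 < n)%N -> (forall a b, 0 <= B a b) ->
  B = al *: perm_mx s + (1 - al) *: Wmx R n ->
  exists x y : R, x ^+ 2 + 2 * x * y + n%:R * y ^+ 2 = 1 /\
    forall a b, B a b = (if s a == b then (x + y) ^+ 2 else y ^+ 2).
Proof.
move=> n_gt1 B_ge0 hB; set c := (1 - al) / n%:R.
have Bc a b : B a b = al * (s a == b)%:R + c by rewrite hB !mxE.
pose i0 : 'I_n := Ordinal (ltnW n_gt1); pose i1 : 'I_n := Ordinal n_gt1.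
have c_ge0 : 0 <= c.
  have s01 : s i0 != s i1 by rewrite (inj_eq perm_inj).
  by have := B_ge0 i0 (s i1); rewrite Bc (negPf s01) mulr0 add0r.
have alc_ge0 : 0 <= al + c by have := B_ge0 i0 (s i0); rewrite Bc eqxx mulr1.
exists (Num.sqrt (al + c) - Num.sqrt c), (Num.sqrt c); split.
  have -> : forall u v : R, (u - v) ^+ 2 + 2 * (u - v) * v + n%:R * v ^+ 2
                            = u ^+ 2 + (n%:R - 1) * v ^+ 2 by move=> u v; ring.
  rewrite !sqr_sqrtr // /c; field; by rewrite pnatr_eq0 -lt0n ltnW.
move=> a b; rewrite Bc; case: eqP => _.
  by rewrite mulr1 subrK sqr_sqrtr.
by rewrite mulr0 add0r sqr_sqrtr.
Qed.

Section RealMatrices.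
Variables (R : realType) (n : nat).

Lemma real_mxE (M : 'M[R[i]]_n) :
  real_mx M -> M = map_mx (real_complex R) (map_mx (@complex.Re R) M).
Proof.
by move=> hM; apply/matrixP => a b; rewrite !mxE; case: (hM a b) => r ->.
Qed.

Lemma real_mx_dephase (H : 'M[R[i]]_n) : real_mx H -> real_mx (dephase H).
Proof.
move=> hH a b; rewrite dephaseE.
case: (hH a a) => p ->; case: (hH a b) => q ->.
by exists (p * q); rewrite conj_real rmorphM.
Qed.

Lemma real_mx_scalar_add (K : 'M[R[i]]_n) (x y : R) :
  real_mx K -> real_mx (x%:C%:M + y%:C *: K).
Proof.
move=> hK a b; rewrite !mxE; case: (hK a b) => k ->.
by exists (x *+ (a == b) + y * k); rewrite rmorphD rmorphMn rmorphM.
Qed.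

Lemma real_mx_row_perm (s : 'S_n) (M : 'M[R[i]]_n) :
  real_mx M -> real_mx (row_perm s M).
Proof. by move=> hM a b; rewrite mxE. Qed.

Lemma orthostochastic_real_unitary (B : 'M[R]_n) (U : 'M[R[i]]_n) :
  bistochastic B -> unitary U -> real_mx U ->
  (forall a b, (B a b)%:C = `|U a b| ^+ 2) -> orthostochastic B.
Proof.
move=> hB hU /real_mxE UE hBU; split=> //.
set O := map_mx (@complex.Re R) U in UE *; exists O; split.
  by apply: orthogonal_real_unitary; rewrite -UE.
move=> a b; have := hBU a b; rewrite UE mxE normCK conj_real -rmorphM.
by case=> ->; rewrite expr2.
Qed.

End RealMatrices.

Lemma ray_unitary_witness (R : realType) n (H : 'M[R[i]]_n) (s : 'S_n)
    (B : 'M[R]_n) (al : R) :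
  (1 < n)%N -> robust_hadamard H -> (forall a b, 0 <= B a b) ->
  B = al *: perm_mx s + (1 - al) *: Wmx R n ->
  exists U : 'M[R[i]]_n, [/\ unitary U, forall a b, (B a b)%:C = `|U a b| ^+ 2
                          & real_mx H -> real_mx U].
Proof.
move=> n_gt1 [hH hsub] B_ge0 hB.
have [x [y [hxy Bxy]]] := ray_entries_sqr n_gt1 B_ge0 hB.
exists (row_perm s (x%:C%:M + y%:C *: dephase H)); split.
- apply/unitary_row_perm/unitary_scalar_add/hxy.
  + exact: dephase_mul_adj.
  + exact: dephase_add_adj.
- move=> a b; rewrite mxE norm_scalar_add_entry ?Bxy //.
  + exact: dephase_diag.
  + exact: norm_dephase.
- by move=> /real_mx_dephase/real_mx_scalar_add/real_mx_row_perm.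
Qed.

Theorem mainTheorem3 (R : realType) (N : nat) (hN : (2 <= N)%N) :
  (exists H : 'M[R[i]]_N, robust_hadamard H) ->
  (forall (s : 'S_N) (B : 'M[R]_N),
      (in_ray s B \/ in_counter_ray s B) -> unistochastic B) /\
  ((exists H : 'M[R[i]]_N, robust_hadamard H /\ real_mx H) ->
   forall (s : 'S_N) (B : 'M[R]_N),
      (in_ray s B \/ in_counter_ray s B) -> orthostochastic B).
Proof.
have witness (H : 'M[R[i]]_N) s B :
    robust_hadamard H -> in_ray s B \/ in_counter_ray s B ->
    bistochastic B /\ exists U : 'M[R[i]]_N,
      [/\ unitary U, forall a b, (B a b)%:C = `|U a b| ^+ 2
         & real_mx H -> real_mx U].
  move=> hH hray; have [hB [al hBal]] : bistochastic B /\ exists al : R,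
      B = al *: perm_mx s + (1 - al) *: Wmx R N.
    by case: hray => -[hB [al [_ hBal]]]; split=> //; exists al.
  by split=> //; exact: ray_unitary_witness hN hH hB.1 hBal.
move=> [H hH]; split=> [s B /(witness H s B hH) [hB [U [hU hBU _]]]|].
  by split=> //; exists U.
move=> [H' [hH' hr]] s B /(witness H' s B hH') [hB [U [hU hBU hreal]]].
exact: orthostochastic_real_unitary hB hU (hreal hr) hBU.
Qed.
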